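(* Fix a natural number $m\ge1$ and reals $a<b$, and let $S=T\cap[a,b]$. Consider the problem ($SDP_0$): minimize $y$ over real numbers $y,x_1,\ldots,x_{2m-1}$ subject to $$y+\sum_{i=1}^k p_{ki}x_i\ \ge\ -p_{k0},\qquad k=1,\ldots,2m-1,$$ and $H_m(1,x_1,\ldots,x_{2m-1},[a,b])\succeq 0$. Let $y^*$ be the optimal (infimal) value and suppose $y^*>0$. Then $$A(\mathbf M,S)\le \frac{1+y^*}{y^*}.$$
   Context: $\mathbf M$ is a 2-point-homogeneous space with its associated real function $\tau(x,y)$ (a function of the distance), $\tau_0:=\tau(x,x)$ (independent of $x$), and $T=\{\tau(x,y):x,y\in\mathbf M\}$. Its zonal spherical functions $\Phi_k$ ($k=0,1,2,\ldots$) are assumed to be real polynomials of degree $k$, written $\Phi_k(t)=\sum_{d=0}^k p_{kd}t^d$, normalized by $\Phi_k(\tau_0)=1$, with the property that for every $k\ge0$ and every finite set $\{x_1,\ldots,x_N\}\subset\mathbf M$ the matrix $(\Phi_k(\tau(x_i,x_j)))_{i,j}$ is positive semidefinite. For $S\subseteq T$, an $S$-code is a finite set $C\subset\mathbf M$ with $\tau(x,y)\in S$ for all distinct $x,y\in C$; $A(\mathbf M,S)$ is the largest cardinality of an $S$-code. For reals $s_0,\ldots,s_{2m-1}$ and $a<b$: $R_m=(s_{i+j-2})_{i,j=1}^m$, $F_m^+(a)=(s_{i+j-1}-a s_{i+j-2})_{i,j=1}^m$, $F_m^-(b)=(b s_{i+j-2}-s_{i+j-1})_{i,j=1}^m$,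 and $H_m(s_0,\ldots,s_{2m-1},[a,b])=\operatorname{diag}(R_m,F_m^+(a),F_m^-(b))$. *)

From HB Require Import structures.
From mathcomp Require Import all_boot all_order all_algebra.
From mathcomp Require Import all_classical all_reals.
Set Implicit Arguments. Unset Strict Implicit. Unset Printing Implicit Defensive.
Import Order.TTheory GRing.Theory Num.Theory.
Local Open Scope ring_scope.
Local Open Scope classical_set_scope.

Definition psd (R : realType) (n : nat) (A : 'M[R]_n) : Prop :=
  A^T = A /\ forall v : 'cV[R]_n, 0 <= (v^T *m A *m v) 0 0.

(* Hankel-type matrices, 0-indexed: s_{i+j-2} (1-indexed) = s (i+j) *)
Definition Rm (R : realType) (m : nat) (s : nat -> R) : 'M[R]_m :=
  \matrix_(i < m, j < m) s (i + j)%N.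
Definition Fplus (R : realType) (m : nat) (s : nat -> R) (a : R) : 'M[R]_m :=
  \matrix_(i < m, j < m) (s (i + j).+1 - a * s (i + j)%N).
Definition Fminus (R : realType) (m : nat) (s : nat -> R) (b : R) : 'M[R]_m :=
  \matrix_(i < m, j < m) (b * s (i + j)%N - s (i + j).+1).

Definition Hm (R : realType) (m : nat) (s : nat -> R) (a b : R)
  : 'M[R]_((m + m) + m) :=
  block_mx (block_mx (Rm m s) 0 0 (Fplus m s a)) 0 0 (Fminus m s b).

Definition one_then (R : realType) (x : nat -> R) : nat -> R :=
  fun i => if i == 0%N then 1 else x i.

Definition SDP0_values (R : realType) (m : nat) (p : nat -> nat -> R) (a b : R)
  : set R :=
  [set y | exists x : nat -> R,
     (forall k : nat, (1 <= k <= (2 * m).-1)%N ->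
        y + \sum_(1 <= i < k.+1) p k i * x i >= - p k 0%N)
     /\ psd (Hm m (one_then x) a b)].

Definition SDP0_opt (R : realType) (m : nat) (p : nat -> nat -> R) (a b : R) : R :=
  inf (SDP0_values m p a b).

Definition isometry (R : realType) (M : Type) (d : M -> M -> R) (f : M -> M) :=
  bijective f /\ forall x y, d (f x) (f y) = d x y.

Definition two_point_homogeneous (R : realType) (M : Type) (d : M -> M -> R) :=
  forall x1 y1 x2 y2, d x1 y1 = d x2 y2 ->
    exists f, isometry d f /\ f x1 = x2 /\ f y1 = y2.

Definition metric_axioms (R : realType) (M : Type) (d : M -> M -> R) :=
  (forall x y, 0 <= d x y) /\ (forall x y, d x y = 0 <-> x = y) /\
  (forall x y, d x y = d y x) /\ (forall x y z, d x z <= d x y + d y z).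

(* S-codes: finite sets (duplicate-free lists) whose pairwise tau-values lie in S *)
Definition is_code (R : realType) (M : eqType) (tau : M -> M -> R) (S : set R)
  (C : seq M) : Prop :=
  uniq C /\ forall x y, x \in C -> y \in C -> x != y -> S (tau x y).

(* For an S-code C of N >= 2 points, consider the uniform probability on the
   ordered pairs of distinct points of C, pushed forward by tau to [a,b].  Its
   moments x_d make H_m(1, x_1, ..., x_{2m-1}, [a,b]) a direct sum of Gram
   matrices of nonnegative measures, hence positive semidefinite, and summing
   all entries of the positive semidefinite matrix Phi_k(tau(c_i, c_j)) gives
   N + N (N - 1) sum_d p_kd x_d >= 0.  So (1/(N-1), x) is feasible for (SDP_0),
   whence y^* <= 1/(N-1), i.e. N <= 1 + 1/y^*. *)

From HB Require Import structures.
From mathcomp Require Import all_boot all_order all_algebra.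
From mathcomp Require Import all_classical all_reals.
From mathcomp Require Import ring lra.
Set Implicit Arguments. Unset Strict Implicit. Unset Printing Implicit Defensive.
Import Order.TTheory GRing.Theory Num.Theory.
Local Open Scope ring_scope.
Local Open Scope classical_set_scope.

Lemma psd_block_diag (R : realType) (n1 n2 : nat) (A : 'M[R]_n1) (B : 'M[R]_n2) :
  psd A -> psd B -> psd (block_mx A 0 0 B).
Proof.
move=> [sA pA] [sB pB]; split; first by rewrite tr_block_mx sA sB !trmx0.
move=> v; rewrite -(vsubmxK v) tr_col_mx mul_row_block !mulmx0 !addr0 add0r.
by rewrite mul_row_col mxE addr_ge0.
Qed.

Lemma psd_sum_ge0 (R : realType) (n : nat) (A : 'M[R]_n) :
  psd A -> 0 <= \sum_i \sum_j A i j.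
Proof.
move=> [_ /(_ (const_mx 1))]; rewrite mxE exchange_big /=.
congr (_ <= _); apply: eq_bigr => j _; rewrite !mxE mulr1.
by apply: eq_bigr => i _; rewrite !mxE mul1r.
Qed.

Section Moments.
Variables (R : realType) (I : finType).

Definition moment (w t : I -> R) (e : nat) : R := \sum_p w p * t p ^+ e.

Lemma psd_Rm_moment (m : nat) (w t : I -> R) :
  (forall p, 0 <= w p) -> psd (Rm m (moment w t)).
Proof.
move=> w_ge0; split; first by apply/matrixP => i j; rewrite !mxE addnC.
move=> v.
pose q p := \sum_(i < m) v i 0 * t p ^+ i.
suff -> : (v^T *m Rm m (moment w t) *m v) 0 0 = \sum_p w p * q p ^+ 2.
  by apply: sumr_ge0 => p _; rewrite mulr_ge0 ?sqr_ge0.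
rewrite mxE.
under eq_bigr => j _ do rewrite mxE big_distrl /=.
under eq_bigr => j _ do under eq_bigr => i _ do
  rewrite !mxE /moment big_distrr big_distrl /=.
rewrite exchange_big /=; under eq_bigr => i _ do rewrite exchange_big /=.
rewrite exchange_big /=; apply: eq_bigr => p _.
rewrite expr2 /q big_distrl big_distrr /=; apply: eq_bigr => i _.
rewrite big_distrr big_distrr /=; apply: eq_bigr => j _.
by rewrite exprD; ring.
Qed.

Lemma Fplus_moment (m : nat) (w t : I -> R) (a : R) :
  Fplus m (moment w t) a = Rm m (moment (fun p => w p * (t p - a)) t).
Proof.
apply/matrixP => i j; rewrite !mxE /moment mulr_sumr -sumrB.
by apply: eq_bigr => p _; rewrite exprS; ring.
Qed.

Lemma Fminus_moment (m : nat) (w t : I -> R) (b : R) :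
  Fminus m (moment w t) b = Rm m (moment (fun p => w p * (b - t p)) t).
Proof.
apply/matrixP => i j; rewrite !mxE /moment mulr_sumr -sumrB.
by apply: eq_bigr => p _; rewrite exprS; ring.
Qed.

Lemma psd_Hm_moment (m : nat) (w t : I -> R) (a b : R) :
  (forall p, 0 <= w p) -> (forall p, w p != 0 -> a <= t p <= b) ->
  psd (Hm m (moment w t) a b).
Proof.
move=> w_ge0 t_ab.
have wt_ge0 (f : R -> R) : (forall x, a <= x <= b -> 0 <= f x) ->
    forall p, 0 <= w p * f (t p).
  move=> f_ge0 p; have [->|/t_ab /f_ge0] := eqVneq (w p) 0; first by rewrite mul0r.
  exact: mulr_ge0.
rewrite /Hm Fplus_moment Fminus_moment.
apply: psd_block_diag; first apply: psd_block_diag.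
- exact: psd_Rm_moment.
- apply/psd_Rm_moment/(wt_ge0 (fun x => x - a)) => x /andP[ax _].
  by rewrite subr_ge0.
- apply/psd_Rm_moment/(wt_ge0 (fun x => b - x)) => x /andP[_ xb].
  by rewrite subr_ge0.
Qed.

Lemma sum_horner_moment (w t : I -> R) (P : {poly R}) :
  \sum_p w p * P.[t p] = \sum_(e < size P) P`_e * moment w t e.
Proof.
under eq_bigr => p _ do rewrite horner_coef big_distrr /=.
rewrite exchange_big /=; apply: eq_bigr => e _.
by rewrite /moment mulr_sumr; apply: eq_bigr => p _; ring.
Qed.

End Moments.

(* [inf E] is 0 for a set without lower bound, so a nonzero infimum certifies one. *)
Lemma inf_le_of_neq0 (R : realType) (E : set R) (y : R) :
  inf E != 0 -> E y -> inf E <= y.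
Proof.
move=> inf_neq0 Ey; apply: ge_inf => //; apply/not_notP => no_lb.
by move: inf_neq0; rewrite inf_out ?eqxx // => -[].
Qed.

Section PairSums.
Variables (R : realType) (N : nat).

Definition offdiag (p : 'I_N * 'I_N) : R := (p.1 != p.2)%:R.

Lemma sum_pairs_diag_offdiag (F : 'I_N * 'I_N -> R) :
  \sum_p F p = \sum_i F (i, i) + \sum_p offdiag p * F p.
Proof.
have sum_pairs (G : 'I_N * 'I_N -> R) : \sum_p G p = \sum_i \sum_j G (i, j).
  by rewrite pair_bigA; apply: eq_bigr => -[].
rewrite !sum_pairs -big_split /=; apply: eq_bigr => i _.
rewrite (bigD1 i) //= [X in _ = _ + X](bigD1 i) //= /offdiag eqxx mul0r add0r.
congr (_ + _); apply: eq_bigr => j ji.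
by rewrite eq_sym ji mul1r.
Qed.

Lemma sum_offdiag : \sum_p offdiag p = N%:R * (N%:R - 1).
Proof.
have := sum_pairs_diag_offdiag (fun => 1).
rewrite !sumr_const card_prod card_ord natrM.
under eq_bigr do rewrite mulr1.
by move=> NN; apply: (addrI N%:R); rewrite -NN; ring.
Qed.

End PairSums.

Arguments offdiag {R N} p.

Lemma one_then_id (R : realType) (x : nat -> R) : x 0%N = 1 -> one_then x = x.
Proof. by move=> x0; apply/funext => -[]. Qed.

Section CodeMoments.
Variables (R : realType) (N : nat) (t : 'I_N * 'I_N -> R).
Hypothesis N_gt1 : (1 < N)%N.

Definition offdiag_prob (p : 'I_N * 'I_N) : R := offdiag p / (N%:R * (N%:R - 1)).

Let x := moment offdiag_prob t.

Let NN1_gt0 : 0 < N%:R * (N%:R - 1) :> R.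
Proof. by rewrite mulr_gt0 ?subr_gt0 ?ltr1n // ltr0n ltnW. Qed.

Lemma offdiag_prob_ge0 p : 0 <= offdiag_prob p.
Proof. by rewrite divr_ge0 ?ler0n ?ltW. Qed.

Lemma moment0_offdiag_prob : x 0%N = 1.
Proof.
rewrite /x /moment; under eq_bigr do rewrite mulr1.
by rewrite -mulr_suml sum_offdiag divff ?gt_eqF.
Qed.

Lemma psd_Hm_offdiag_moment (m : nat) (a b : R) :
  (forall p, p.1 != p.2 -> a <= t p <= b) -> psd (Hm m (one_then x) a b).
Proof.
move=> t_ab; rewrite one_then_id ?moment0_offdiag_prob //.
apply: psd_Hm_moment => [|p]; first exact: offdiag_prob_ge0.
have [/t_ab //|] := boolP (p.1 != p.2).
by rewrite /offdiag_prob /offdiag => /negbTE ->; rewrite mul0r eqxx.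
Qed.

Lemma offdiag_moment_ineq (Q : {poly R}) :
  (forall i, Q.[t (i, i)] = 1) -> psd (\matrix_(i, j) Q.[t (i, j)]) ->
  0 <= (N%:R - 1)^-1 + \sum_(e < size Q) Q`_e * x e.
Proof.
move=> Q_diag /psd_sum_ge0.
have -> : \sum_i \sum_j (\matrix_(i, j) Q.[t (i, j)]) i j = \sum_p Q.[t p].
  by rewrite pair_bigA; apply: eq_bigr => -[i j] _; rewrite mxE.
rewrite sum_pairs_diag_offdiag.
under eq_bigr do rewrite Q_diag.
rewrite sumr_const card_ord -sum_horner_moment.
have -> : \sum_p offdiag p * Q.[t p]
    = N%:R * (N%:R - 1) * \sum_p offdiag_prob p * Q.[t p].
  rewrite mulr_sumr; apply: eq_bigr => p _.
  by rewrite /offdiag_prob mulrA [_ * (_ / _)]mulrC divfK ?gt_eqF.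
set X := \sum_p offdiag_prob p * _ => sum_ge0.
have : 0 <= (N%:R * (N%:R - 1))^-1 * (N%:R + N%:R * (N%:R - 1) * X).
  by rewrite mulr_ge0 // invr_ge0 ltW.
rewrite mulrDr mulrA mulVf ?gt_eqF // mul1r invfM mulrAC mulVf ?mul1r //.
by rewrite pnatr_eq0 -lt0n ltnW.
Qed.

Lemma SDP0_values_offdiag_moment (m : nat) (a b : R) (Phi : nat -> {poly R}) :
  (forall k, size (Phi k) = k.+1) ->
  (forall k i, (Phi k).[t (i, i)] = 1) ->
  (forall k, psd (\matrix_(i, j) (Phi k).[t (i, j)])) ->
  (forall p, p.1 != p.2 -> a <= t p <= b) ->
  SDP0_values m (fun k d => (Phi k)`_d) a b (N%:R - 1)^-1.
Proof.
move=> size_Phi Phi_diag Phi_psd t_ab.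
exists x; split=> [k _|]; last exact: psd_Hm_offdiag_moment.
have := offdiag_moment_ineq (Phi_diag k) (Phi_psd k).
rewrite size_Phi -(big_mkord xpredT (fun e => (Phi k)`_e * x e)) big_ltn //.
rewrite moment0_offdiag_prob mulr1; lra.
Qed.

End CodeMoments.

Theorem theorem4p1 (R : realType) (M : eqType) (d : M -> M -> R)
  (g : R -> R) (tau : M -> M -> R) (tau0 : R) (Phi : nat -> {poly R})
  (m : nat) (a b : R) :
  metric_axioms d ->
  two_point_homogeneous d ->
  (forall x y, tau x y = g (d x y)) ->
  (forall x, tau x x = tau0) ->
  (forall k, size (Phi k) = k.+1) ->
  (forall k, (Phi k).[tau0] = 1) ->
  (forall (k N : nat) (pts : 'I_N -> M), injective pts ->
      psd (\matrix_(i < N, j < N) (Phi k).[tau (pts i) (pts j)])) ->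
  (1 <= m)%N -> a < b ->
  let T := [set t | exists x y, tau x y = t] in
  let S := T `&` [set t | a <= t <= b] in
  let ystar := SDP0_opt m (fun k dd => (Phi k)`_dd) a b in
  0 < ystar ->
  forall C : seq M, is_code tau S C ->
    (size C)%:R <= (1 + ystar) / ystar.
Proof.
move=> _ _ _ tau_diag size_Phi Phi_tau0 Phi_psd _ _ T S ystar ystar_gt0 C [C_uniq C_S].
have [C_small|N_gt1] := leqP (size C) 1.
  apply: (@le_trans _ _ 1); first by rewrite lern1.
  by rewrite ler_pdivlMr // mul1r lerDr ltW.
pose pts := tnth (in_tuple C).
have pts_inj : injective pts by apply/tuple_uniqP.
pose t p := tau (pts p.1) (pts p.2).
have t_ab p : p.1 != p.2 -> a <= t p <= b.
  move=> p12; have pts12 : pts p.1 != pts p.2 by rewrite (inj_eq pts_inj).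
  by have [_] := C_S _ _ (mem_tnth p.1 (in_tuple C)) (mem_tnth p.2 (in_tuple C)) pts12.
have t_diag k i : (Phi k).[t (i, i)] = 1 by rewrite /t tau_diag Phi_tau0.
have feasible := SDP0_values_offdiag_moment N_gt1 m size_Phi t_diag
  (fun k => Phi_psd k _ pts pts_inj) t_ab.
have := inf_le_of_neq0 (lt0r_neq0 ystar_gt0) feasible; rewrite -/ystar => ystar_le.
have N1_gt0 : 0 < (size C)%:R - 1 :> R by rewrite subr_gt0 ltr1n.
move: ystar_le; rewrite -[_^-1]div1r ler_pdivlMr // ler_pdivlMr //; lra.
Qed.
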